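(* Let $\lambda,\lambda_1,\sigma,\sigma_1\in\mathbb{C}^*$ and $\eta,\eta_1\in\mathbb{C}$. Then: (1) $\Omega(\lambda,\eta,\sigma,0)\cong\Omega(\lambda_1,\eta_1,\sigma_1,0)$ as $\mathcal{G}$-modules if and only if $\lambda=\lambda_1,\eta=\eta_1,\sigma=\sigma_1$; (2) $\Omega(\lambda,\eta,0,\sigma)\cong\Omega(\lambda_1,\eta_1,0,\sigma_1)$ if and only if $\lambda=\lambda_1,\eta=\eta_1,\sigma=\sigma_1$; (3) $\Omega(\lambda,\eta,\sigma,0)$ and $\Omega(\lambda_1,\eta_1,0,\sigma_1)$ are not isomorphic.
   Context: $\mathcal{G}$ is the complex Lie algebra with basis $\{L_n,H_n,I_n,J_n,\mathbf{c}_1,\mathbf{c}_2,\mathbf{c}_3: n\in\mathbb{Z}\}$ whose brackets of basis elements are $[L_m,L_n]=(n-m)L_{m+n}+\frac{m^3-m}{12}\delta_{m+n,0}\mathbf{c}_1$, $[L_m,H_n]=nH_{m+n}+m^2\delta_{m+n,0}\mathbf{c}_2$, $[H_m,H_n]=m\delta_{m+n,0}\mathbf{c}_3$, $[L_m,I_n]=(n-m)I_{m+n}$, $[L_m,J_n]=(n-m)J_{m+n}$, $[H_m,I_n]=I_{m+n}$, $[H_m,J_n]=-J_{m+n}$ (and antisymmetric counterparts), all other brackets of basis elements zero. For $\lambda\in\mathbb{C}^*,\eta\in\mathbb{C}$, $\sigma\in\mathbb{C}^*$: $\Omega(\lambda,\eta,\sigma,0)$ is $\mathbb{C}[X,Y]$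 with $L_mf(X,Y)=\lambda^mf(X,Y-m)(Y-mX+m\eta)$, $H_mf=\lambda^mXf(X,Y-m)$, $I_mf=\lambda^m\sigma f(X-1,Y-m)$, and $J_m,\mathbf{c}_1,\mathbf{c}_2,\mathbf{c}_3$ acting as $0$; $\Omega(\lambda,\eta,0,\sigma)$ is $\mathbb{C}[X,Y]$ with $L_mf=\lambda^mf(X,Y-m)(Y+mX+m\eta)$, $H_mf=\lambda^mXf(X,Y-m)$, $J_mf=\lambda^m\sigma f(X+1,Y-m)$, and $I_m,\mathbf{c}_1,\mathbf{c}_2,\mathbf{c}_3$ acting as $0$ ($m\in\mathbb{Z}$). *)

From mathcomp Require Import all_boot all_order all_algebra.
From mathcomp.real_closed Require Import complex.
From mathcomp Require Import Rstruct.
Set Implicit Arguments. Unset Strict Implicit. Unset Printing Implicit Defensive.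
Import Order.TTheory GRing.Theory Num.Theory.
Local Open Scope ring_scope.

Notation C := (Rdefinitions.R)[i].

Inductive Gbasis : Type :=
| Lb of int | Hb of int | Ib of int | Jb of int | c1b | c2b | c3b.

(* C[X,Y] is represented as {poly {poly C}}: the outer variable is Y,
   the inner (coefficient) variable is X. *)
Definition CXY := {poly {poly C}}.
Definition varY : CXY := 'X.
Definition varX : CXY := ('X)%:P.
Definition cst (a : C) : CXY := a%:P%:P.

(* shift a b f = f(X - a, Y - b) *)
Definition shift (a b : C) (f : CXY) : CXY :=
  (map_poly (fun c : {poly C} => c \Po ('X - a%:P)) f) \Po ('X - (b%:P)%:P).

(* Omega(lam, eta, sig, 0) : action of basis elements on C[X,Y]. *)
Definition OmegaI (lam eta sig : C) (b : Gbasis) (f : CXY) : CXY :=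
  match b with
  | Lb m => cst (lam ^ m) * shift 0 (m%:~R) f
              * (varY - cst (m%:~R) * varX + cst (m%:~R * eta))
  | Hb m => cst (lam ^ m) * varX * shift 0 (m%:~R) f
  | Ib m => cst (lam ^ m * sig) * shift 1 (m%:~R) f
  | _ => 0
  end.

(* Omega(lam, eta, 0, sig) *)
Definition OmegaJ (lam eta sig : C) (b : Gbasis) (f : CXY) : CXY :=
  match b with
  | Lb m => cst (lam ^ m) * shift 0 (m%:~R) f
              * (varY + cst (m%:~R) * varX + cst (m%:~R * eta))
  | Hb m => cst (lam ^ m) * varX * shift 0 (m%:~R) f
  | Jb m => cst (lam ^ m * sig) * shift (-1) (m%:~R) f
  | _ => 0
  end.

(* Two G-module structures on C[X,Y] (given by the action of basis elements,
   extended linearly) are isomorphic iff there is a C-linear bijection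
   intertwining the action of every basis element. *)
Definition Gmod_iso (rho1 rho2 : Gbasis -> CXY -> CXY) : Prop :=
  exists phi : CXY -> CXY,
    [/\ (forall (a : C) (f g : CXY), phi (cst a * f + g) = cst a * phi f + phi g),
        bijective phi &
        forall (b : Gbasis) (f : CXY), phi (rho1 b f) = rho2 b (phi f)].

(* In both families H_0 and L_0 act by multiplication by X and by Y, so a
   module isomorphism phi commutes with multiplication by every polynomial,
   i.e. phi f = f * phi 1; bijectivity makes phi 1 a unit of C[X,Y], hence a
   nonzero constant.  Isomorphic modules therefore agree on u . 1 for every
   basis element u, and H_1 . 1 = lam X, L_1 . 1 = lam (Y -+ X + eta) and
   I_0 . 1 = sig (resp. J_0 . 1 = sig) recover the parameters, while I_0
   kills the second family. *)
From mathcomp Require Import ring.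
From mathcomp Require Import all_boot all_order all_algebra.
From mathcomp.real_closed Require Import complex.
From mathcomp Require Import Rstruct.
Set Implicit Arguments. Unset Strict Implicit. Unset Printing Implicit Defensive.
Import GRing.Theory.
Local Open Scope ring_scope.

Lemma commute_mulXY_is_mul (R : comNzRingType)
    (phi : {poly {poly R}} -> {poly {poly R}}) :
  (forall a f g, phi (a%:P%:P * f + g) = a%:P%:P * phi f + phi g) ->
  (forall f, phi ('X%:P * f) = 'X%:P * phi f) ->
  (forall f, phi (f * 'X) = phi f * 'X) ->
  forall f, phi f = f * phi 1.
Proof.
move=> phi_lin phiX phiY.
have phi0 : phi 0 = 0.
  have := phi_lin 1 0 0; rewrite !polyC1 !mul1r addr0 => /eqP.
  by rewrite -subr_eq subrr eq_sym => /eqP.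
have phiD f g : phi (f + g) = phi f + phi g.
  by have := phi_lin 1 f g; rewrite !polyC1 !mul1r.
have phiC a : phi (a%:P%:P) = a%:P%:P * phi 1.
  by have := phi_lin a 1 0; rewrite mulr1 phi0 !addr0.
have phi_cst c : phi c%:P = c%:P * phi 1.
  elim/poly_ind: c => [|c a IH]; first by rewrite phi0 mul0r.
  rewrite polyCD polyCM phiD phiC mulrC phiX IH; ring.
elim/poly_ind=> [|f c IH]; first by rewrite phi0 mul0r.
by rewrite phiD phi_cst phiY IH; ring.
Qed.

Lemma poly2_unit_cst (R : idomainType) (p : {poly {poly R}}) :
  p \is a GRing.unit -> p = (p`_0`_0)%:P%:P.
Proof.
rewrite poly_unitE => /andP[/eqP size_p]; rewrite poly_unitE => /andP[/eqP size_p0 _].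
by rewrite -(size1_polyC (eq_leq size_p0)) -(size1_polyC (eq_leq size_p)).
Qed.

Lemma shift_cst a b d : shift a b (cst d) = cst d.
Proof. by rewrite /shift /cst map_polyC /= !comp_polyC. Qed.

Lemma shift1 a b : shift a b 1 = 1.
Proof. by have := shift_cst a b 1; rewrite /cst !polyC1. Qed.

Lemma shift00 f : shift 0 0 f = f.
Proof.
rewrite /shift !polyC0 !subr0 comp_polyXr map_poly_id // => c _.
by rewrite comp_polyXr.
Qed.

Lemma cst0 : cst 0 = 0. Proof. by rewrite /cst !polyC0. Qed.

Lemma cst1 : cst 1 = 1. Proof. by rewrite /cst !polyC1. Qed.

Lemma cst_inj : injective cst.
Proof. by move=> a b /polyC_inj/polyC_inj. Qed.

Lemma cst_eq0 a : (cst a == 0) = (a == 0).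
Proof. by rewrite !polyC_eq0. Qed.

Lemma varX_neq0 : varX != 0.
Proof. by rewrite polyC_eq0 polyX_eq0. Qed.

Definition Cartan_regular (rho : Gbasis -> CXY -> CXY) : Prop :=
  (forall f, rho (Hb 0) f = varX * f) /\ (forall f, rho (Lb 0) f = f * varY).

Section IsoOfCartanRegular.

Variables rho1 rho2 : Gbasis -> CXY -> CXY.
Hypothesis rho1_regular : Cartan_regular rho1.
Hypothesis rho2_regular : Cartan_regular rho2.
Hypothesis rho2_cst : forall b d, rho2 b (cst d) = cst d * rho2 b 1.

Lemma Gmod_iso_act1 : Gmod_iso rho1 rho2 -> forall b, rho1 b 1 = rho2 b 1.
Proof.
case: rho1_regular rho2_regular => [rho1_H0 rho1_L0] [rho2_H0 rho2_L0].
case=> phi [phi_lin [psi phiK psiK] phi_act] b.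
have phi_mul f : phi f = f * phi 1.
  apply: commute_mulXY_is_mul => // g.
  - by rewrite -rho1_H0 phi_act rho2_H0.
  - by rewrite -rho1_L0 phi_act rho2_L0.
have phi1_unit : phi 1 \is a GRing.unit.
  by apply/unitrPr; exists (psi 1); rewrite mulrC -phi_mul psiK.
have [d phi1_cst] : exists d, phi 1 = cst d.
  by exists (phi 1)`_0`_0; apply: poly2_unit_cst.
have := phi_act b 1; rewrite phi_mul phi1_cst => act.
apply: (@mulrI _ (cst d)); first by rewrite -phi1_cst.
by rewrite mulrC act; apply: rho2_cst.
Qed.

End IsoOfCartanRegular.

Lemma OmegaI_regular lam eta sig : Cartan_regular (OmegaI lam eta sig).
Proof.
split=> f; rewrite /OmegaI expr0z shift00 cst1.
- by rewrite mul1r.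
- by rewrite mulr0z (mul0r eta) cst0; ring.
Qed.

Lemma OmegaJ_regular lam eta sig : Cartan_regular (OmegaJ lam eta sig).
Proof.
split=> f; rewrite /OmegaJ expr0z shift00 cst1.
- by rewrite mul1r.
- by rewrite mulr0z (mul0r eta) cst0; ring.
Qed.

(* The [in LHS]/[in RHS] restrictions keep rewrite from trying to unify the
   polynomial 1 with [cst ?d], which is correct but extremely slow. *)
Lemma OmegaI_cst lam eta sig b d :
  OmegaI lam eta sig b (cst d) = cst d * OmegaI lam eta sig b 1.
Proof.
by case: b => [m|m|m|m|||]; rewrite /OmegaI ?[in LHS]shift_cst ?[in RHS]shift1; ring.
Qed.

Lemma OmegaJ_cst lam eta sig b d :
  OmegaJ lam eta sig b (cst d) = cst d * OmegaJ lam eta sig b 1.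
Proof.
by case: b => [m|m|m|m|||]; rewrite /OmegaJ ?[in LHS]shift_cst ?[in RHS]shift1; ring.
Qed.

Lemma OmegaI_H1 (lam eta sig : C) : OmegaI lam eta sig (Hb 1) 1 = cst lam * varX.
Proof. by rewrite /OmegaI shift1 expr1z mulr1. Qed.

Lemma OmegaI_I0 (lam eta sig : C) : OmegaI lam eta sig (Ib 0) 1 = cst sig.
Proof. by rewrite /OmegaI shift1 expr0z mul1r mulr1. Qed.

Lemma OmegaI_L1 (lam eta sig : C) :
  OmegaI lam eta sig (Lb 1) 1 = cst lam * (varY - varX + cst eta).
Proof. by rewrite /OmegaI shift1 expr1z mulr1z (mul1r eta) cst1; ring. Qed.

Lemma OmegaJ_H1 (lam eta sig : C) : OmegaJ lam eta sig (Hb 1) 1 = cst lam * varX.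
Proof. by rewrite /OmegaJ shift1 expr1z mulr1. Qed.

Lemma OmegaJ_J0 (lam eta sig : C) : OmegaJ lam eta sig (Jb 0) 1 = cst sig.
Proof. by rewrite /OmegaJ shift1 expr0z mul1r mulr1. Qed.

Lemma OmegaJ_L1 (lam eta sig : C) :
  OmegaJ lam eta sig (Lb 1) 1 = cst lam * (varY + varX + cst eta).
Proof. by rewrite /OmegaJ shift1 expr1z mulr1z (mul1r eta) cst1; ring. Qed.

Lemma OmegaI_act1_inj (lam eta sig lam1 eta1 sig1 : C) : lam != 0 ->
  (forall b, OmegaI lam eta sig b 1 = OmegaI lam1 eta1 sig1 b 1) ->
  [/\ lam = lam1, eta = eta1 & sig = sig1].
Proof.
move=> lam_neq0 act1.
have e_lam : lam = lam1.
  by have := act1 (Hb 1); rewrite !OmegaI_H1 => /(mulIf varX_neq0)/cst_inj.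
have e_sig : sig = sig1 by have := act1 (Ib 0); rewrite !OmegaI_I0 => /cst_inj.
have cst_lam_neq0 : cst lam != 0 by rewrite cst_eq0.
split=> //; have := act1 (Lb 1); rewrite !OmegaI_L1 -e_lam.
by move/(mulfI cst_lam_neq0)/addrI/cst_inj.
Qed.

Lemma OmegaJ_act1_inj (lam eta sig lam1 eta1 sig1 : C) : lam != 0 ->
  (forall b, OmegaJ lam eta sig b 1 = OmegaJ lam1 eta1 sig1 b 1) ->
  [/\ lam = lam1, eta = eta1 & sig = sig1].
Proof.
move=> lam_neq0 act1.
have e_lam : lam = lam1.
  by have := act1 (Hb 1); rewrite !OmegaJ_H1 => /(mulIf varX_neq0)/cst_inj.
have e_sig : sig = sig1 by have := act1 (Jb 0); rewrite !OmegaJ_J0 => /cst_inj.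
have cst_lam_neq0 : cst lam != 0 by rewrite cst_eq0.
split=> //; have := act1 (Lb 1); rewrite !OmegaJ_L1 -e_lam.
by move/(mulfI cst_lam_neq0)/addrI/cst_inj.
Qed.

Lemma Gmod_iso_refl rho : Gmod_iso rho rho.
Proof. by exists id; split=> //; exists id. Qed.

Theorem corollary4p4 (lam lam1 sig sig1 eta eta1 : C) :
  lam != 0 -> lam1 != 0 -> sig != 0 -> sig1 != 0 ->
  [/\ (Gmod_iso (OmegaI lam eta sig) (OmegaI lam1 eta1 sig1) <->
         [/\ lam = lam1, eta = eta1 & sig = sig1]),
      (Gmod_iso (OmegaJ lam eta sig) (OmegaJ lam1 eta1 sig1) <->
         [/\ lam = lam1, eta = eta1 & sig = sig1]) &
      ~ Gmod_iso (OmegaI lam eta sig) (OmegaJ lam1 eta1 sig1)].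
Proof.
move=> lam_neq0 _ sig_neq0 _; split.
- split=> [|[<- <- <-]]; last exact: Gmod_iso_refl.
  move/(Gmod_iso_act1 (OmegaI_regular _ _ _) (OmegaI_regular _ _ _) (@OmegaI_cst _ _ _)).
  exact: OmegaI_act1_inj.
- split=> [|[<- <- <-]]; last exact: Gmod_iso_refl.
  move/(Gmod_iso_act1 (OmegaJ_regular _ _ _) (OmegaJ_regular _ _ _) (@OmegaJ_cst _ _ _)).
  exact: OmegaJ_act1_inj.
- move/(Gmod_iso_act1 (OmegaI_regular _ _ _) (OmegaJ_regular _ _ _) (@OmegaJ_cst _ _ _)).
  move/(_ (Ib 0))/eqP; rewrite OmegaI_I0 cst_eq0.
  exact/negP.
Qed.
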